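(* Let $\omega\in\mathbb{C}$ and let $\{P_n\}_{n\geqslant0}$ be a $D_\omega$-classical monic OPS with recurrence $P_{n+2}=(x-\beta_{n+1})P_{n+1}-\gamma_{n+1}P_n$ ($n\geqslant0$), $P_1=x-\beta_0$, $P_0=1$, and let $Q_n:=(n+1)^{-1}D_\omega P_{n+1}$, which is a monic OPS with recurrence $Q_{n+2}=(x-\tilde\beta_{n+1})Q_{n+1}-\tilde\gamma_{n+1}Q_n$ ($n\geqslant0$), $Q_1=x-\tilde\beta_0$, $Q_0=1$. Put $\tilde\alpha^1_n:=(n+1)(\beta_{n+1}-\tilde\beta_n-\omega)$ and $\tilde\alpha^0_n:=(n+1)\gamma_{n+2}-(n+2)\tilde\gamma_{n+1}$ for $n\geqslant0$, so that $P_{n+2}=Q_{n+2}+\tilde\alpha^1_{n+1}Q_{n+1}+\tilde\alpha^0_nQ_n$ ($n\geqslant0$) and $P_1=Q_1+\tilde\alpha^1_0$. Suppose $\Phi(x)=a_2x^2+a_1x+a_0$ is a polynomial of degree at most two and $\alpha^2_{n+2},\alpha^1_{n+1},\alpha^0_n$ ($n\geqslant0$) are complex numbers with $\alpha^0_n\neq0$ such that $$\Phi(x)Q_n(x)=\alpha^2_{n+2}P_{n+2}(x)+\alpha^1_{n+1}P_{n+1}(x)+\alpha^0_nP_n(x),\quad n\geqslant0.$$ Then, with the convention $\tilde\gamma_0:=0$, $$\alpha^2_{n+2}=a_2\ (n\geqslant0),\qquad \alpha^1_{n+1}+a_2\tilde\alpha^1_{n+1}=a_2(\tilde\beta_{n+1}+\tilde\beta_n)+a_1\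 (n\geqslant0),$$ $$\alpha^1_{n+1}\tilde\alpha^1_n+a_2\tilde\alpha^0_n+\alpha^0_n=a_2(\tilde\gamma_{n+1}+\tilde\gamma_n+\tilde\beta_n^2)+a_1\tilde\beta_n+a_0\ (n\geqslant0),$$ $$\alpha^1_{n+1}\tilde\alpha^0_{n-1}+\alpha^0_n\tilde\alpha^1_{n-1}=a_2\tilde\gamma_n(\tilde\beta_n+\tilde\beta_{n-1})+a_1\tilde\gamma_n\ (n\geqslant1),$$ $$\alpha^0_{n+1}\tilde\alpha^0_{n-1}=a_2\tilde\gamma_{n+1}\tilde\gamma_n\ (n\geqslant1).$$
   Context: For $\omega\neq0$, $(D_\omega f)(x)=\frac{f(x+\omega)-f(x)}{\omega}$ on complex polynomials; $D_0=d/dx$. A monic OPS is a sequence of monic polynomials $P_n$, $\deg P_n=n$, with a linear functional $u$ such that $\langle u,P_nP_m\rangle=k_n\delta_{nm}$, $k_n\neq0$; such a sequence satisfies a three-term recurrence with $\gamma_n\neq0$. An OPS $\{P_n\}$ is $D_\omega$-classical if $\{(n+1)^{-1}D_\omega P_{n+1}\}_{n\geqslant0}$ is also an OPS; in that case a relation of the displayed form $\Phi Q_n=\alpha^2_{n+2}P_{n+2}+\alpha^1_{n+1}P_{n+1}+\alpha^0_nP_n$ with $\deg\Phi\leqslant2$ exists (first structure relation). *)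

(* The complex field is modelled as  R[i] = complex R  for
   R : realType (a complete archimedean ordered field, i.e. the reals). *)
From HB Require Import structures.
From mathcomp Require Import all_boot all_order all_algebra.
From mathcomp Require Import complex.
From mathcomp Require Import reals.
Set Implicit Arguments. Unset Strict Implicit. Unset Printing Implicit Defensive.
Import Order.TTheory GRing.Theory Num.Theory.
Local Open Scope ring_scope.
Local Open Scope complex_scope.

Definition Dw {C : fieldType} (w : C) (f : {poly C}) : {poly C} :=
  if w == 0 then f^`() else w^-1 *: (f \Po ('X + w%:P) - f).

Definition is_monic_OPS {C : fieldType} (P : nat -> {poly C}) : Prop :=
  (forall n, P n \is monic /\ size (P n) = n.+1) /\
  exists u : {poly C} -> C,
    (forall (a : C) (p q : {poly C}), u (a *: p + q) = a * u p + u q) /\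
    (forall n m, n <> m -> u (P n * P m) = 0) /\
    (forall n, u (P n * P n) <> 0).

Definition Dw_derived {C : fieldType} (w : C) (P : nat -> {poly C}) (n : nat)
  : {poly C} := (n.+1%:R)^-1 *: Dw w (P n.+1).

Definition is_Dw_classical {C : fieldType} (w : C) (P : nat -> {poly C}) : Prop :=
  is_monic_OPS P /\ is_monic_OPS (Dw_derived w P).

From HB Require Import structures.
From mathcomp Require Import all_boot all_order all_algebra.
From mathcomp Require Import complex reals.
From mathcomp Require Import ring.
Set Implicit Arguments.
Unset Strict Implicit.
Unset Printing Implicit Defensive.

Import Order.TTheory GRing.Theory Num.Theory.
Local Open Scope ring_scope.

(* Applying D_w to the recurrence of P and eliminating x Q_n with the
   recurrence of Q writes every P_n as Q_n + tilde-alpha^1 Q_(n-1)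
   + tilde-alpha^0 Q_(n-2).  Expanding Phi Q_n by two applications of the
   recurrence of Q gives a second combination of Q_(n+2), ..., Q_(n-2) for the
   same polynomial; since deg Q_k = k such coordinates are unique, and equating
   them yields the five identities. *)

Lemma poly_size_le3 (C : nzRingType) (p : {poly C}) :
  (size p <= 3)%N -> p = (p`_2)%:P * 'X^2 + (p`_1)%:P * 'X + (p`_0)%:P.
Proof.
move=> size_p; apply/polyP => i; rewrite !coefD !coefCM coefXn coefX coefC.
case: i => [|[|[|i]]] /=; rewrite ?mulr0 ?mulr1 ?addr0 ?add0r //.
by rewrite nth_default // (leq_trans size_p).
Qed.

Section DwCalculus.

Variables (C : fieldType) (w : C).

Lemma DwZ a f : Dw w (a *: f) = a *: Dw w f.
Proof.
rewrite /Dw; case: eqP => _; first by rewrite derivZ.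
by rewrite comp_polyZ -!mul_polyC; ring.
Qed.

Lemma DwB f g : Dw w (f - g) = Dw w f - Dw w g.
Proof.
rewrite /Dw; case: eqP => _; first by rewrite derivB.
by rewrite comp_polyB -!mul_polyC; ring.
Qed.

Lemma DwC c : Dw w c%:P = 0.
Proof.
rewrite /Dw; case: eqP => _; first by rewrite derivC.
by rewrite comp_polyC subrr scaler0.
Qed.

Lemma DwXM f : Dw w ('X * f) = ('X + w%:P) * Dw w f + f.
Proof.
rewrite /Dw; case: eqP => [-> | /eqP w_neq0].
  by rewrite derivM derivX addr0 mul1r addrC.
have wVw : w^-1%:P * w%:P = 1 :> {poly C} by rewrite -polyCM mulVf.
rewrite comp_polyM comp_polyX -!mul_polyC.
transitivity (w^-1%:P * (('X + w%:P) * (f \Po ('X + w%:P)) - 'X * f)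
              + (1 - w^-1%:P * w%:P) * f); last by ring.
by rewrite wVw subrr mul0r addr0.
Qed.

End DwCalculus.

Section GradedFamily.

Variables (C : idomainType) (Q : nat -> {poly C}).
Hypothesis size_Q : forall k, size (Q k) = k.+1.

Lemma graded_combination_eq0 (s : seq (C * nat)) :
  sorted (fun x y => y.2 < x.2)%N s ->
  \sum_(x <- s) x.1 *: Q x.2 = 0 -> all (fun x => x.1 == 0) s.
Proof.
elim: s => [//|[c m] s IHs] /= s_sorted; rewrite big_cons /= => comb0.
have /allP tail_lt := order_path_min (fun _ _ _ h1 h2 => ltn_trans h2 h1) s_sorted.
have size_tail : (size (\sum_(x <- s) x.1 *: Q x.2)%R <= m)%N.
  apply: (leq_trans (size_sum _ _ _)); apply/bigmax_leqP_seq => x x_in_s _.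
  by apply: (leq_trans (size_scale_leq _ _)); rewrite size_Q; apply: tail_lt.
have c0 : c = 0.
  have := congr1 (fun p : {poly C} => p`_m) comb0.
  rewrite coefD coefZ coef0 (nth_default _ size_tail) addr0.
  have -> : (Q m)`_m = lead_coef (Q m) by rewrite lead_coefE size_Q.
  by move/eqP; rewrite mulf_eq0 lead_coef_eq0 -size_poly_eq0 size_Q orbF => /eqP.
rewrite c0 eqxx /=; apply: IHs; first exact: path_sorted s_sorted.
by move: comb0; rewrite c0 scale0r add0r.
Qed.

(* With truncated subtraction [Q n.-1] and [Q n.-2] coincide with lower-index
   terms when [n <= 1]; the two guards make those coefficients vanish. *)
Lemma five_term_combination_eq0 n (c4 c3 c2 c1 c0 : C) :
  (n = 0%N -> c1 = 0) -> ((n <= 1)%N -> c0 = 0) ->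
  c4 *: Q n.+2 + c3 *: Q n.+1 + c2 *: Q n + c1 *: Q n.-1 + c0 *: Q n.-2 = 0 ->
  [/\ c4 = 0, c3 = 0, c2 = 0, ((0 < n)%N -> c1 = 0) & ((1 < n)%N -> c0 = 0)].
Proof.
case: n => [|[|k]] /= c1_0 c0_0.
- rewrite c1_0 // c0_0 // !scale0r !addr0 => comb0.
  have := graded_combination_eq0 (s := [:: (c4, 2%N); (c3, 1%N); (c2, 0%N)]) isT.
  rewrite !big_cons big_nil /= addr0 !addrA comb0 !andbT => /(_ erefl).
  by case/and3P => /eqP-> /eqP-> /eqP->.
- rewrite c0_0 // scale0r addr0 => comb0.
  have := graded_combination_eq0
    (s := [:: (c4, 3%N); (c3, 2%N); (c2, 1%N); (c1, 0%N)]) isT.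
  rewrite !big_cons big_nil /= addr0 !addrA comb0 !andbT => /(_ erefl).
  by case/and4P => /eqP-> /eqP-> /eqP-> /eqP->.
- move=> comb0.
  have := graded_combination_eq0
    (s := [:: (c4, k.+4); (c3, k.+3); (c2, k.+2); (c1, k.+1); (c0, k)]).
  rewrite !big_cons big_nil /= addr0 !addrA comb0 !ltnSn !andbT => /(_ isT erefl).
  by case/and5P => /eqP-> /eqP-> /eqP-> /eqP-> /eqP->.
Qed.

Lemma five_term_coords_inj n (x4 x3 x2 x1 x0 y4 y3 y2 y1 y0 : C) :
  x4 *: Q n.+2 + x3 *: Q n.+1 + x2 *: Q n + x1 *: Q n.-1 + x0 *: Q n.-2
  = y4 *: Q n.+2 + y3 *: Q n.+1 + y2 *: Q n + y1 *: Q n.-1 + y0 *: Q n.-2 ->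
  (n = 0%N -> x1 = y1) -> ((n <= 1)%N -> x0 = y0) ->
  [/\ x4 = y4, x3 = y3, x2 = y2, ((0 < n)%N -> x1 = y1) & ((1 < n)%N -> x0 = y0)].
Proof.
move=> xy e1 e0.
have [/e1->|/e0->||] :=
  @five_term_combination_eq0 n (x4 - y4) (x3 - y3) (x2 - y2) (x1 - y1) (x0 - y0).
- exact: subrr.
- exact: subrr.
- by rewrite !scalerBl; move/eqP: xy; rewrite -subr_eq0 => /eqP <-; ring.
move=> /subr0_eq-> /subr0_eq-> /subr0_eq-> d1 d0.
by split=> // n_pos; apply/subr0_eq; [exact: d1 | exact: d0].
Qed.

End GradedFamily.

Section ThreeTermRecurrence.

Variables (C : comNzRingType) (Q : nat -> {poly C}) (b g : nat -> C).
Hypothesis g0 : g 0%N = 0.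

Lemma mulX_three_term :
  Q 0%N = 1 -> Q 1%N = 'X - (b 0%N)%:P ->
  (forall n, Q n.+2 = ('X - (b n.+1)%:P) * Q n.+1 - g n.+1 *: Q n) ->
  forall n, 'X * Q n = Q n.+1 + b n *: Q n + g n *: Q n.-1.
Proof.
move=> Q0 Q1 Q_rec [|n] /=; last by rewrite Q_rec -!mul_polyC; ring.
by rewrite Q1 Q0 g0 scale0r addr0 -mul_polyC; ring.
Qed.

Hypothesis mulX_Q : forall n, 'X * Q n = Q n.+1 + b n *: Q n + g n *: Q n.-1.

Lemma quadratic_mulQ a2 a1 a0 n :
  (a2%:P * 'X^2 + a1%:P * 'X + a0%:P) * Q n =
  a2 *: Q n.+2 + (a2 * (b n.+1 + b n) + a1) *: Q n.+1
  + (a2 * (g n.+1 + g n + b n ^+ 2) + a1 * b n + a0) *: Q n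
  + (a2 * g n * (b n + b n.-1) + a1 * g n) *: Q n.-1
  + (a2 * g n * g n.-1) *: Q n.-2.
Proof.
have XQ_pred :
    g n *: ('X * Q n.-1) = g n *: (Q n + b n.-1 *: Q n.-1 + g n.-1 *: Q n.-2).
  by case: n => [|n]; rewrite ?g0 ?scale0r // mulX_Q.
transitivity (a2 *: ('X * ('X * Q n)) + a1 *: ('X * Q n) + a0 *: Q n).
  by rewrite -!mul_polyC; ring.
rewrite (mulX_Q n) !mulrDr -!scalerAr XQ_pred !mulX_Q.
by rewrite -!mul_polyC; ring.
Qed.

End ThreeTermRecurrence.

Section DwClassical.

Variables (C : numFieldType) (w : C) (P : nat -> {poly C}).
Variables (beta gamma beta_t gamma_t : nat -> C).
Let Q := Dw_derived w P.

Hypothesis P0 : P 0%N = 1.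
Hypothesis P_rec :
  forall n, P n.+2 = ('X - (beta n.+1)%:P) * P n.+1 - gamma n.+1 *: P n.
Hypothesis Q0 : Q 0%N = 1.
Hypothesis mulX_Q :
  forall n, 'X * Q n = Q n.+1 + beta_t n *: Q n + gamma_t n *: Q n.-1.

(* In the paper's notation [P_on_Q1 n.+1] is tilde-alpha^1_n and
   [P_on_Q2 n.+2] is tilde-alpha^0_n. *)
Definition P_on_Q1 n := n%:R * (beta n - beta_t n.-1 - w).
Definition P_on_Q2 n := n.-1%:R * gamma n - n%:R * gamma_t n.-1.

Lemma Dw_P n : Dw w (P n) = n%:R *: Q n.-1.
Proof.
case: n => [|n]; first by rewrite P0 -polyC1 DwC scale0r.
by rewrite /Q /Dw_derived scalerA mulfV ?scale1r // pnatr_eq0.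
Qed.

Lemma P_in_Q n : P n = Q n + P_on_Q1 n *: Q n.-1 + P_on_Q2 n *: Q n.-2.
Proof.
case: n => [|n].
  by rewrite P0 Q0 /P_on_Q1 /P_on_Q2 !mul0r subrr !scale0r !addr0.
have := congr1 (Dw w) (P_rec n).
rewrite mulrBl mul_polyC !DwB !DwZ DwXM !Dw_P /= => Dw_rec.
have -> : P n.+1 = n.+2%:R *: Q n.+1 - n.+1%:R *: ('X * Q n)
    + (n.+1%:R * (beta n.+1 - w)) *: Q n + (gamma n.+1 * n%:R) *: Q n.-1.
  by rewrite Dw_rec -!mul_polyC; ring.
by rewrite mulX_Q /P_on_Q1 /P_on_Q2 /= -!mul_polyC; ring.
Qed.

Hypothesis size_Q : forall n, size (Q n) = n.+1.
Hypothesis gamma_t0 : gamma_t 0%N = 0.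
Variables (a2 a1 a0 : C) (alpha2 alpha1 alpha0 : nat -> C).
Hypothesis structure_rel : forall n,
  (a2%:P * 'X^2 + a1%:P * 'X + a0%:P) * Q n
  = alpha2 n.+2 *: P n.+2 + alpha1 n.+1 *: P n.+1 + alpha0 n *: P n.

Lemma structure_relation_coords n :
  [/\ a2 = alpha2 n.+2,
      a2 * (beta_t n.+1 + beta_t n) + a1
        = alpha2 n.+2 * P_on_Q1 n.+2 + alpha1 n.+1,
      a2 * (gamma_t n.+1 + gamma_t n + beta_t n ^+ 2) + a1 * beta_t n + a0
        = alpha2 n.+2 * P_on_Q2 n.+2 + alpha1 n.+1 * P_on_Q1 n.+1 + alpha0 n,
      (0 < n)%N -> a2 * gamma_t n * (beta_t n + beta_t n.-1) + a1 * gamma_t n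
                   = alpha1 n.+1 * P_on_Q2 n.+1 + alpha0 n * P_on_Q1 n &
      (1 < n)%N -> a2 * gamma_t n * gamma_t n.-1 = alpha0 n * P_on_Q2 n].
Proof.
apply: (five_term_coords_inj size_Q).
- rewrite -(quadratic_mulQ gamma_t0 mulX_Q) structure_rel !P_in_Q /=.
  by rewrite -!mul_polyC; ring.
- by move=> ->; rewrite /P_on_Q1 /P_on_Q2 /= gamma_t0; ring.
- by case: n => [|[|n]] //= _; rewrite /P_on_Q2 /= gamma_t0; ring.
Qed.

Lemma structure_relation_coefs :
  (forall n, alpha2 n.+2 = a2) /\
  (forall n, alpha1 n.+1 + a2 * P_on_Q1 n.+2 = a2 * (beta_t n.+1 + beta_t n) + a1) /\
  (forall n, alpha1 n.+1 * P_on_Q1 n.+1 + a2 * P_on_Q2 n.+2 + alpha0 n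
             = a2 * (gamma_t n.+1 + gamma_t n + beta_t n ^+ 2) + a1 * beta_t n + a0) /\
  (forall n, alpha1 n.+2 * P_on_Q2 n.+2 + alpha0 n.+1 * P_on_Q1 n.+1
             = a2 * gamma_t n.+1 * (beta_t n.+1 + beta_t n) + a1 * gamma_t n.+1) /\
  (forall n, alpha0 n.+2 * P_on_Q2 n.+2 = a2 * gamma_t n.+2 * gamma_t n.+1).
Proof.
have alpha2E n : alpha2 n.+2 = a2 by case: (structure_relation_coords n).
split=> [//|]; split=> [n|].
  by case: (structure_relation_coords n) => _ -> _ _ _; rewrite alpha2E addrC.
split=> [n|].
  by case: (structure_relation_coords n) => _ _ -> _ _; rewrite alpha2E; ring.
split=> n; first by case: (structure_relation_coords n.+1) => _ _ _ /(_ isT)-> _.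
by case: (structure_relation_coords n.+2) => _ _ _ _ /(_ isT)->.
Qed.

End DwClassical.

Theorem proposition2p1 (R : realType) (w : R[i])
  (P : nat -> {poly R[i]}) (beta gamma beta_t gamma_t : nat -> R[i])
  (Phi : {poly R[i]}) (alpha2 alpha1 alpha0 : nat -> R[i]) :
  is_Dw_classical w P ->
  P 0%N = 1 ->
  P 1%N = 'X - (beta 0%N)%:P ->
  (forall n, P n.+2 = ('X - (beta n.+1)%:P) * P n.+1 - gamma n.+1 *: P n) ->
  let Q := Dw_derived w P in
  Q 0%N = 1 ->
  Q 1%N = 'X - (beta_t 0%N)%:P ->
  (forall n, Q n.+2 = ('X - (beta_t n.+1)%:P) * Q n.+1 - gamma_t n.+1 *: Q n) ->
  let alpha1_t := fun n : nat => n.+1%:R * (beta n.+1 - beta_t n - w) in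
  let alpha0_t := fun n : nat => n.+1%:R * gamma n.+2 - n.+2%:R * gamma_t n.+1 in
  (size Phi <= 3)%N ->
  let a2 := Phi`_2 in let a1 := Phi`_1 in let a0 := Phi`_0 in
  (forall n, alpha0 n != 0) ->
  (forall n, Phi * Q n = alpha2 n.+2 *: P n.+2 + alpha1 n.+1 *: P n.+1
                         + alpha0 n *: P n) ->
  let gt := fun n : nat => if n == 0%N then 0 else gamma_t n in
  (forall n, alpha2 n.+2 = a2) /\
  (forall n, alpha1 n.+1 + a2 * alpha1_t n.+1
             = a2 * (beta_t n.+1 + beta_t n) + a1) /\
  (forall n, alpha1 n.+1 * alpha1_t n + a2 * alpha0_t n + alpha0 n
             = a2 * (gt n.+1 + gt n + beta_t n ^+ 2) + a1 * beta_t n + a0) /\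
  (forall n, (1 <= n)%N ->
     alpha1 n.+1 * alpha0_t n.-1 + alpha0 n * alpha1_t n.-1
     = a2 * gt n * (beta_t n + beta_t n.-1) + a1 * gt n) /\
  (forall n, (1 <= n)%N ->
     alpha0 n.+1 * alpha0_t n.-1 = a2 * gt n.+1 * gt n).
Proof.
move=> [_ [Q_monic_size _]] P0 _ P_rec Q Q0 Q1 Q_rec alpha1_t alpha0_t size_Phi
  a2 a1 a0 _ Phi_rel gt.
have size_Q n : size (Q n) = n.+1 := (Q_monic_size n).2.
have mulX_Q := mulX_three_term (g := gt) erefl Q0 Q1 Q_rec.
have Phi_eq : Phi = a2%:P * 'X^2 + a1%:P * 'X + a0%:P := poly_size_le3 size_Phi.
have structure_rel n : (a2%:P * 'X^2 + a1%:P * 'X + a0%:P) * Q n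
    = alpha2 n.+2 *: P n.+2 + alpha1 n.+1 *: P n.+1 + alpha0 n *: P n.
  by rewrite -Phi_eq.
have [E1 [E2 [E3 [E4 E5]]]] :=
  structure_relation_coefs P0 P_rec Q0 mulX_Q size_Q erefl structure_rel.
split; first exact: E1.
split; first exact: E2.
split; first exact: E3.
split; case=> [//|n] _; [exact: E4 | exact: E5].
Qed.
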